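(* Let $L>0$ and let $f:\mathbb{R}\times\mathbb{R}\to\mathbb{R}$ be continuous, $L$-periodic in the first argument, and continuously differentiable in the second argument. Let $\phi:[x_0,+\infty)\to\mathbb{R}$ be a bounded solution of $\phi_{xx}=f(x,\phi)$, and assume $$\min_{x\in[0,L],\ y\in[\inf_{x\ge x_0}\phi(x),\,\sup_{x\ge x_0}\phi(x)]}\frac{\partial f(x,y)}{\partial y}>0 .$$ Then there exists an $L$-periodic solution $\varphi$ of $\varphi_{xx}=f(x,\varphi)$ such that $$\lim_{x\to+\infty}\big(|\phi(x)-\varphi(x)|+|\phi_x(x)-\varphi_x(x)|\big)=0 .$$ *)

From Stdlib Require Import Reals.
From Coquelicot Require Import Coquelicot.
Open Scope R_scope.

Definition range_from (phi : R -> R) (x0 : R) : R -> Prop :=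
  fun y => exists x, x0 <= x /\ y = phi x.

From Stdlib Require Import Reals Lra.
From Coquelicot Require Import Coquelicot.
Open Scope R_scope.

(* The increment w x = phi (x + L) - phi x satisfies
   w'' = f x (phi (x + L)) - f x (phi x), and since df >= m > 0 on the range of phi,
   w w'' >= m w^2.  So z = w^2 is bounded, nonnegative and z'' >= 2 m z; boundedness
   forces z' <= 0, then z' + k z <= 0, hence z decays exponentially.  An interpolation
   inequality (|w'| <= 2 sup|w| / d + d sup|w''|) and the Lipschitz bound |w''| <= Kd |w|
   give the same decay for w' and w''.  Therefore phi (x + n L), phi' (x + n L) and
   f (x + n L) (phi (x + n L)) converge geometrically, locally uniformly in x, to an
   L-periodic vphi, to vphi', and to f x (vphi x); passing to the limit in the
   derivatives shows that vphi solves the equation, and the n = 0 error bound gives the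
   asymptotics. *)

Lemma is_derive_continuity_pt (g : R -> R) x l :
  is_derive g x l -> continuity_pt g x.
Proof.
  intro H. apply continuity_pt_filterlim. apply (ex_derive_continuous g x). now exists l.
Qed.

Lemma is_derive_shift (G : R -> R) s x l :
  is_derive G (x + s) l -> is_derive (fun t => G (t + s)) x l.
Proof.
  intro H. replace l with (scal 1 l) by exact (scal_one l).
  apply (is_derive_comp G (fun t => t + s)); [exact H|].
  auto_derive; [easy | ring].
Qed.

Lemma exists_nat_mult_ge L y : 0 < L -> exists N : nat, y <= INR N * L.
Proof.
  intro HL. destruct (Rle_or_lt y 0) as [Hy | Hy].
  - exists 0%nat. simpl. lra.
  - destruct (nfloor_ex (y / L)) as [n [_ Hn]].
    { apply Rlt_le, Rdiv_lt_0_compat; lra. }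
    exists (S n). rewrite S_INR.
    apply Rmult_lt_compat_r with (r := L) in Hn; [|lra].
    unfold Rdiv in Hn. rewrite Rmult_assoc, Rinv_l, Rmult_1_r in Hn; lra.
Qed.

Lemma exp_le_compat x y : x <= y -> exp x <= exp y.
Proof.
  intro H. destruct (Rle_lt_or_eq_dec x y H) as [Hlt | ->]; [|lra].
  now apply Rlt_le, exp_increasing.
Qed.

Lemma exp_INR_mult (n : nat) x : exp (INR n * x) = exp x ^ n.
Proof.
  induction n as [|n IH].
  - simpl. rewrite Rmult_0_l. apply exp_0.
  - rewrite S_INR, Rmult_plus_distr_r, Rmult_1_l, exp_plus, IH. simpl. ring.
Qed.

Lemma exp_shift_nat lam s L (n : nat) :
  exp (- lam * (s + INR n * L)) = exp (- lam * s) * exp (- lam * L) ^ n.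
Proof. rewrite <- exp_INR_mult, <- exp_plus. f_equal. ring. Qed.

Lemma is_lim_exp_neg lam : 0 < lam -> is_lim (fun x => exp (- lam * x)) p_infty 0.
Proof.
  intro Hlam. apply (is_lim_comp exp (fun x => - lam * x) p_infty 0 m_infty).
  - apply is_lim_exp_m.
  - replace m_infty with (Rbar_mult (- lam) p_infty)
      by (simpl; destruct (Rle_dec 0 (- lam)); [exfalso; lra | reflexivity]).
    apply is_lim_scal_l, is_lim_id.
  - exists 0. intros x _. discriminate.
Qed.

Lemma nondecreasing_of_derive_nonneg (g dg : R -> R) a :
  (forall x, a <= x -> is_derive g x (dg x)) ->
  (forall x, a <= x -> 0 <= dg x) ->
  forall x y, a <= x -> x <= y -> g x <= g y.
Proof.
  intros Hd Hpos x y Hx Hxy.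
  destruct (MVT_gen g x y dg) as [c [Hc Hmvt]].
  - intros t Ht. apply Hd. rewrite Rmin_left in Ht; lra.
  - intros t Ht. apply (is_derive_continuity_pt g t (dg t)), Hd.
    rewrite Rmin_left in Ht; lra.
  - rewrite Rmin_left, Rmax_right in Hc by lra.
    assert (0 <= dg c * (y - x)) by (apply Rmult_le_pos; [apply Hpos|]; lra).
    lra.
Qed.

Lemma exp_growth_of_derive_ge (g dg : R -> R) k a :
  (forall x, a <= x -> is_derive g x (dg x)) ->
  (forall x, a <= x -> k * g x <= dg x) ->
  forall t, a <= t -> g a * exp (k * (t - a)) <= g t.
Proof.
  intros Hd Hge t Ht.
  assert (Hmono : g a * exp (- k * a) <= g t * exp (- k * t)).
  { apply (nondecreasing_of_derive_nonneg (fun x => g x * exp (- k * x))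
             (fun x => (dg x - k * g x) * exp (- k * x)) a); try lra.
    - intros x Hx.
      replace ((dg x - k * g x) * exp (- k * x))
        with (dg x * exp (- k * x) + g x * (- k * exp (- k * x))) by ring.
      apply (is_derive_mult g (fun x => exp (- k * x))); [now apply Hd| |apply Rmult_comm].
      auto_derive; [easy | ring].
    - intros x Hx. apply Rmult_le_pos; [specialize (Hge x Hx); lra | apply Rlt_le, exp_pos]. }
  apply Rmult_le_compat_r with (r := exp (k * t)) in Hmono; [|apply Rlt_le, exp_pos].
  rewrite !Rmult_assoc, <- !exp_plus in Hmono.
  replace (- k * t + k * t) with 0 in Hmono by ring.
  replace (- k * a + k * t) with (k * (t - a)) in Hmono by ring.
  now rewrite exp_0, Rmult_1_r in Hmono.
Qed.

Lemma is_lim_seq_of_telescoping_majorant (u e : nat -> R) :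
  (forall n, Rabs (u (S n) - u n) <= e n - e (S n)) -> is_lim_seq e 0 ->
  is_lim_seq u (real (Lim_seq u)) /\ forall n, Rabs (real (Lim_seq u) - u n) <= e n.
Proof.
  intros Hstep He.
  assert (Hlo : forall n, u n - e n <= u (S n) - e (S n)).
  { intro n. specialize (Hstep n). apply Rabs_le_between in Hstep. lra. }
  assert (Hhi : forall n, u (S n) + e (S n) <= u n + e n).
  { intro n. specialize (Hstep n). apply Rabs_le_between in Hstep. lra. }
  assert (He_pos : forall n, 0 <= e n).
  { apply (is_lim_seq_decr_compare e 0 He). intro n.
    specialize (Hstep n). pose proof (Rabs_pos (u (S n) - u n)). lra. }
  destruct (ex_finite_lim_seq_incr (fun n => u n - e n) (u O + e O) Hlo) as [l Hl].
  { intro n. pose proof (decreasing_prop (fun n => u n + e n) O n Hhi (Nat.le_0_l n)).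
    simpl in *. specialize (He_pos n). lra. }
  assert (Hu : is_lim_seq u l).
  { apply is_lim_seq_ext with (u := fun n => (u n - e n) + e n); [intro; ring|].
    replace (Finite l) with (Rbar_plus l 0) by (simpl; f_equal; ring).
    now apply is_lim_seq_plus'. }
  assert (Hv : is_lim_seq (fun n => u n + e n) l).
  { replace (Finite l) with (Rbar_plus l 0) by (simpl; f_equal; ring).
    now apply is_lim_seq_plus'. }
  rewrite (is_lim_seq_unique u l Hu). split; [exact Hu|]. intro n.
  pose proof (is_lim_seq_incr_compare _ l Hl Hlo n).
  pose proof (is_lim_seq_decr_compare _ l Hv Hhi n).
  simpl. apply Rabs_le_between. lra.
Qed.

Lemma bounded_of_small_oscillation (h : R -> R) a b d :
  0 < d ->
  (forall u v, a <= u <= b -> a <= v <= b -> Rabs (u - v) <= d -> Rabs (h u - h v) <= 1) ->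
  forall n : nat, b - a <= INR n * d ->
  forall u, a <= u <= b -> Rabs (h u) <= Rabs (h a) + INR n.
Proof.
  intros Hd Hosc n Hn u Hu.
  assert (Hsteps : forall k : nat, forall u, a <= u <= b -> u <= a + INR k * d ->
            Rabs (h u) <= Rabs (h a) + INR k).
  { induction k as [|k IH]; intros v Hv Hvk.
    - simpl in *. replace v with a by lra. lra.
    - set (v' := Rmax a (v - d)).
      assert (Hv' : a <= v' <= b /\ v' <= a + INR k * d /\ Rabs (v - v') <= d).
      { unfold v'. rewrite S_INR in Hvk. pose proof (pos_INR k).
        destruct (Rle_dec a (v - d)).
        - rewrite Rmax_right by lra. rewrite Rabs_pos_eq by lra. lra.
        - rewrite Rmax_left by lra. rewrite Rabs_pos_eq by lra.
          pose proof (Rmult_le_pos _ _ (pos_INR k) (Rlt_le _ _ Hd)). lra. }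
      destruct Hv' as [Hv'ab [Hv'k Hvv']].
      pose proof (IH v' Hv'ab Hv'k). pose proof (Hosc v v' Hv Hv'ab Hvv').
      pose proof (Rabs_triang_inv (h v) (h v')). rewrite S_INR. lra. }
  apply Hsteps; lra.
Qed.

Lemma bounded_on_rectangle (g : R -> R -> R) a b c d :
  (forall x y, continuity_2d_pt g x y) ->
  exists K, forall x y, a <= x <= b -> c <= y <= d -> Rabs (g x y) <= K.
Proof.
  intro Hg.
  destruct (uniform_continuity_2d g a b c d (fun x y _ _ => Hg x y) (mkposreal 1 Rlt_0_1))
    as [delta Hdelta]; simpl in Hdelta.
  set (e := delta / 2).
  assert (He : 0 < e) by (pose proof (cond_pos delta); unfold e; lra).
  destruct (exists_nat_mult_ge e (b - a) He) as [n1 Hn1].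
  destruct (exists_nat_mult_ge e (d - c) He) as [n2 Hn2].
  exists (Rabs (g a c) + INR n1 + INR n2). intros x y Hx Hy.
  assert (Hclose : forall s, Rabs s <= e -> Rabs s < delta).
  { intros s Hs. unfold e in Hs. pose proof (cond_pos delta). lra. }
  assert (Hrow : Rabs (g x c) <= Rabs (g a c) + INR n1).
  { apply (bounded_of_small_oscillation (fun x => g x c) a b e He); [|exact Hn1|exact Hx].
    intros u v Hu Hv Huv. apply Rlt_le, Hdelta; try lra.
    now apply Hclose. rewrite Rminus_diag, Rabs_R0. apply cond_pos. }
  assert (Hcol : Rabs (g x y) <= Rabs (g x c) + INR n2).
  { apply (bounded_of_small_oscillation (g x) c d e He); [|exact Hn2|exact Hy].
    intros u v Hu Hv Huv. apply Rlt_le, Hdelta; try lra.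
    rewrite Rminus_diag, Rabs_R0. apply cond_pos. now apply Hclose. }
  lra.
Qed.

Lemma periodic_nat (g : R -> R) L :
  (forall x, g (x + L) = g x) -> forall (n : nat) x, g (x + INR n * L) = g x.
Proof.
  intros Hper n. induction n as [|n IH]; intro x.
  - simpl. now rewrite Rmult_0_l, Rplus_0_r.
  - rewrite S_INR. replace (x + (INR n + 1) * L) with ((x + INR n * L) + L) by ring.
    now rewrite Hper.
Qed.

Lemma periodic_reduce (g : R -> R) L :
  0 < L -> (forall x, g (x + L) = g x) ->
  forall x, exists x', 0 <= x' <= L /\ g x = g x'.
Proof.
  intros HL Hper x.
  assert (HnL : forall r : R, 0 <= r -> exists n : nat, INR n * L <= r * L < (INR n + 1) * L).
  { intros r Hr. destruct (nfloor_ex r Hr) as [n Hn]. exists n.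
    split; apply Rmult_le_compat_r || apply Rmult_lt_compat_r; lra. }
  destruct (Rle_or_lt 0 x) as [Hx | Hx].
  - destruct (HnL (x / L)) as [n Hn]; [apply Rdiv_le_0_compat; lra|].
    unfold Rdiv in Hn. rewrite Rmult_assoc, Rinv_l, Rmult_1_r in Hn by lra.
    exists (x - INR n * L). split; [lra|].
    rewrite <- (periodic_nat g L Hper n (x - INR n * L)). f_equal. ring.
  - destruct (HnL (- x / L)) as [n Hn]; [apply Rdiv_le_0_compat; lra|].
    unfold Rdiv in Hn. rewrite Rmult_assoc, Rinv_l, Rmult_1_r in Hn by lra.
    exists (x + (INR n + 1) * L). split; [lra|].
    rewrite <- S_INR. symmetry. apply periodic_nat, Hper.
Qed.

Section Bounded_convex_decay.

Variables (z z' z'' : R -> R) (a Z c : R).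
Hypothesis Hc : 0 < c.
Hypothesis Hz : forall x, a < x -> is_derive z x (z' x).
Hypothesis Hz' : forall x, a < x -> is_derive z' x (z'' x).
Hypothesis Hz_bounds : forall x, a < x -> 0 <= z x <= Z.
Hypothesis Hz'' : forall x, a < x -> c * z x <= z'' x.

Lemma bounded_convex_derive_nonpos x : a < x -> z' x <= 0.
Proof.
  intro Hx. apply Rnot_lt_le. intro Hs.
  assert (Hz'_ge : forall t, x <= t -> z' x <= z' t).
  { intros t Ht. apply (nondecreasing_of_derive_nonneg z' z'' x); try lra.
    - intros y Hy. apply Hz'. lra.
    - intros y Hy. pose proof (Hz'' y ltac:(lra)). pose proof (Hz_bounds y ltac:(lra)). nra. }
  assert (Hlin : forall t, x <= t -> z x - z' x * x <= z t - z' x * t).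
  { intros t Ht.
    apply (nondecreasing_of_derive_nonneg (fun t => z t - z' x * t) (fun t => z' t - z' x) x);
      [|intros y Hy; specialize (Hz'_ge y Hy); lra | lra | exact Ht].
    intros y Hy. apply (is_derive_minus z (fun t => z' x * t)); [apply Hz; lra|].
    auto_derive; [easy | ring]. }
  set (t := x + (Z + 1) / z' x).
  assert (Ht : x <= t).
  { pose proof (Hz_bounds x Hx). unfold t.
    assert (0 < (Z + 1) / z' x) by (apply Rdiv_lt_0_compat; lra). lra. }
  pose proof (Hlin t Ht). pose proof (Hz_bounds t ltac:(lra)). pose proof (Hz_bounds x Hx).
  assert (z' x * t = z' x * x + (Z + 1)) by (unfold t; field; lra).
  lra.
Qed.

Lemma bounded_convex_derive_le x :
  a < x -> z' x + Rmin 1 c * z x <= 0.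
Proof.
  intro Hx. set (k := Rmin 1 c).
  assert (Hk : 0 < k) by (apply Rmin_glb_lt; lra).
  assert (Hkk : k * k <= c) by (pose proof (Rmin_l 1 c); pose proof (Rmin_r 1 c); unfold k in *; nra).
  apply Rnot_lt_le. intro Hp. set (p := z' x + k * z x) in *.
  (* As k^2 <= c, p' >= k p: p grows exponentially, whereas p <= k Z because z' <= 0. *)
  assert (Hgrowth : forall t, x <= t -> p * exp (k * (t - x)) <= z' t + k * z t).
  { apply (exp_growth_of_derive_ge (fun t => z' t + k * z t) (fun t => z'' t + k * z' t)).
    - intros y Hy. apply (is_derive_plus z' (fun t => k * z t) y); [apply Hz'; lra|].
      apply is_derive_scal, Hz. lra.
    - intros y Hy. pose proof (Hz'' y ltac:(lra)). pose proof (Hz_bounds y ltac:(lra)). nra. }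
  set (t := x + (k * Z + 1) / (p * k)).
  assert (Hpt : p * (k * (t - x)) = k * Z + 1) by (unfold t; field; lra).
  pose proof (Hz_bounds x Hx).
  assert (Ht : x <= t).
  { unfold t. assert (0 < (k * Z + 1) / (p * k)) by (apply Rdiv_lt_0_compat; nra). lra. }
  pose proof (Hgrowth t Ht). pose proof (exp_ineq1_le (k * (t - x))).
  pose proof (bounded_convex_derive_nonpos t ltac:(lra)). pose proof (Hz_bounds t ltac:(lra)).
  assert (p * (1 + k * (t - x)) <= p * exp (k * (t - x))) by (apply Rmult_le_compat_l; lra).
  nra.
Qed.

Lemma bounded_convex_exp_decay b t :
  a < b -> b <= t -> z t <= z b * exp (- Rmin 1 c * (t - b)).
Proof.
  intros Hb Ht.
  pose proof (exp_growth_of_derive_ge (fun t => - z t) (fun t => - z' t) (- Rmin 1 c) b) as H.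
  enough (- z b * exp (- Rmin 1 c * (t - b)) <= - z t) by lra.
  apply H; [| |exact Ht].
  - intros y Hy. apply (is_derive_opp z y), Hz. lra.
  - intros y Hy. pose proof (bounded_convex_derive_le y ltac:(lra)). lra.
Qed.

End Bounded_convex_decay.

Lemma Rabs_derive_le_of_bounds (w w' w'' : R -> R) t d eps K :
  0 < d ->
  (forall x, t <= x <= t + d -> is_derive w x (w' x)) ->
  (forall x, t <= x <= t + d -> is_derive w' x (w'' x)) ->
  (forall x, t <= x <= t + d -> Rabs (w x) <= eps) ->
  (forall x, t <= x <= t + d -> Rabs (w'' x) <= K) ->
  Rabs (w' t) <= 2 * eps / d + K * d.
Proof.
  intros Hd Hw Hw' Hw_bound Hw''_bound.
  destruct (MVT_gen w t (t + d) w') as [xi [Hxi Hmvt]].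
  - intros x Hx. rewrite Rmin_left, Rmax_right in Hx by lra. apply Hw. lra.
  - intros x Hx. rewrite Rmin_left, Rmax_right in Hx by lra.
    apply (is_derive_continuity_pt w x (w' x)), Hw, Hx.
  - rewrite Rmin_left, Rmax_right in Hxi by lra.
    destruct (MVT_gen w' t xi w'') as [eta [Heta Hmvt']].
    + intros x Hx. rewrite Rmin_left, Rmax_right in Hx by lra. apply Hw'. lra.
    + intros x Hx. rewrite Rmin_left, Rmax_right in Hx by lra.
      apply (is_derive_continuity_pt w' x (w'' x)), Hw'. lra.
    + rewrite Rmin_left, Rmax_right in Heta by lra.
      assert (Hmean : Rabs (w' xi) * d <= 2 * eps).
      { assert (E : Rabs (w' xi) * d = Rabs (w (t + d) - w t)).
        { rewrite Hmvt, Rabs_mult, (Rabs_pos_eq (t + d - t)) by lra. f_equal. ring. }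
        rewrite E. pose proof (Rabs_triang (w (t + d)) (- w t)). rewrite Rabs_Ropp in H.
        pose proof (Hw_bound (t + d) ltac:(lra)). pose proof (Hw_bound t ltac:(lra)).
        unfold Rminus. lra. }
      assert (Hchange : Rabs (w' xi - w' t) <= K * d).
      { rewrite Hmvt', Rabs_mult, (Rabs_pos_eq (xi - t)) by lra.
        apply Rmult_le_compat; [apply Rabs_pos | lra | apply Hw''_bound; lra | lra]. }
      assert (Rabs (w' xi) <= 2 * eps / d).
      { apply Rmult_le_reg_r with d; [exact Hd|]. unfold Rdiv.
        rewrite Rmult_assoc, Rinv_l, Rmult_1_r by lra. exact Hmean. }
      pose proof (Rabs_triang_inv (w' t) (w' xi)). rewrite <- Rabs_Ropp in Hchange.
      replace (- (w' xi - w' t)) with (w' t - w' xi) in Hchange by ring. lra.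
Qed.

Lemma is_lim_seq_scal_geom K r : 0 <= r < 1 -> is_lim_seq (fun n => K * r ^ n) 0.
Proof.
  intro Hr. replace (Finite 0) with (Rbar_mult K 0) by (simpl; f_equal; ring).
  apply is_lim_seq_scal_l, is_lim_seq_geom. rewrite Rabs_pos_eq; lra.
Qed.

Lemma CVU_dom_of_majorant (fn : nat -> R -> R) (D : R -> Prop) (beta : nat -> R) :
  is_lim_seq beta 0 ->
  (forall n x, D x -> Rabs (fn n x - real (Lim_seq (fun m => fn m x))) <= beta n) ->
  CVU_dom fn D.
Proof.
  intros Hbeta Hmaj eps. apply is_lim_seq_spec in Hbeta. destruct (Hbeta eps) as [N HN].
  exists N. intros n Hn x Hx. apply Rle_lt_trans with (1 := Hmaj n x Hx).
  specialize (HN n Hn). rewrite Rminus_0_r in HN. apply Rabs_lt_between in HN. lra.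
Qed.

Definition periodic_limit (G : R -> R) (L x : R) : R :=
  real (Lim_seq (fun n => G (x + INR n * L))).

Lemma periodic_limit_shift_nat G L (N : nat) x :
  periodic_limit G L (x + INR N * L) = periodic_limit G L x.
Proof.
  unfold periodic_limit. rewrite <- (Lim_seq_incr_n (fun n => G (x + INR n * L)) N).
  f_equal. apply Lim_seq_ext. intro n. rewrite plus_INR. f_equal. ring.
Qed.

Lemma periodic_limit_incr_n G L (N : nat) x :
  real (Lim_seq (fun n => G (x + INR (n + N) * L))) = periodic_limit G L x.
Proof.
  unfold periodic_limit. now rewrite (Lim_seq_incr_n (fun n => G (x + INR n * L)) N).
Qed.

Lemma periodic_limit_periodic G L x : periodic_limit G L (x + L) = periodic_limit G L x.
Proof.
  pose proof (periodic_limit_shift_nat G L 1 x) as H. simpl in H.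
  now rewrite Rmult_1_l in H.
Qed.

Lemma periodic_limit_comp (h : R -> R -> R) (G : R -> R) L c :
  (forall x y, h (x + L) y = h x y) ->
  continuity_pt (h c) (periodic_limit G L c) ->
  is_lim_seq (fun n => G (c + INR n * L)) (periodic_limit G L c) ->
  periodic_limit (fun y => h y (G y)) L c = h c (periodic_limit G L c).
Proof.
  intros Hper Hcont Hlim. unfold periodic_limit at 1.
  rewrite (Lim_seq_ext _ (fun n => h c (G (c + INR n * L))))
    by (intro n; exact (periodic_nat (fun x => h x _) L (fun x => Hper x _) n c)).
  now rewrite (is_lim_seq_unique _ _ (is_lim_seq_continuous (h c) _ _ Hcont Hlim)).
Qed.

Section Periodic_limit.

Variables (L lam a C : R).
Hypothesis HL : 0 < L.
Hypothesis Hlam : 0 < lam.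
Hypothesis HC : 0 <= C.

Lemma exp_neg_period_lt_1 : 0 < exp (- lam * L) < 1.
Proof.
  split; [apply exp_pos|]. rewrite <- exp_0. apply exp_increasing. nra.
Qed.

Lemma periodic_limit_error (G : R -> R) :
  (forall t, a <= t -> Rabs (G (t + L) - G t) <= C * exp (- lam * t)) ->
  forall s, a <= s ->
  is_lim_seq (fun n => G (s + INR n * L)) (periodic_limit G L s) /\
  forall n, Rabs (periodic_limit G L s - G (s + INR n * L))
              <= C / (1 - exp (- lam * L)) * exp (- lam * (s + INR n * L)).
Proof.
  intros HG s Hs. pose proof exp_neg_period_lt_1 as Hr.
  apply is_lim_seq_of_telescoping_majorant.
  - intro n. rewrite S_INR.
    replace (s + (INR n + 1) * L) with ((s + INR n * L) + L) by ring.
    replace (- lam * (s + INR n * L + L)) with (- lam * (s + INR n * L) + - lam * L) by ring.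
    rewrite exp_plus.
    replace (C / (1 - exp (- lam * L)) * exp (- lam * (s + INR n * L)) -
             C / (1 - exp (- lam * L)) * (exp (- lam * (s + INR n * L)) * exp (- lam * L)))
      with (C * exp (- lam * (s + INR n * L))) by (field; lra).
    apply HG. pose proof (pos_INR n). nra.
  - apply is_lim_seq_ext with
      (u := fun n => C / (1 - exp (- lam * L)) * exp (- lam * s) * exp (- lam * L) ^ n).
    + intro n. rewrite exp_shift_nat. ring.
    + apply is_lim_seq_scal_geom. lra.
Qed.

Lemma periodic_limit_asymptotic (G : R -> R) :
  (forall t, a <= t -> Rabs (G (t + L) - G t) <= C * exp (- lam * t)) ->
  forall x, a <= x ->
  Rabs (G x - periodic_limit G L x) <= C / (1 - exp (- lam * L)) * exp (- lam * x).
Proof.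
  intros HG x Hx. pose proof (proj2 (periodic_limit_error G HG x Hx) 0%nat) as H.
  simpl INR in H. rewrite Rmult_0_l, Rplus_0_r, Rabs_minus_sym in H. exact H.
Qed.

Lemma periodic_limit_is_lim (G : R -> R) :
  (forall t, a <= t -> Rabs (G (t + L) - G t) <= C * exp (- lam * t)) ->
  forall s, is_lim_seq (fun n => G (s + INR n * L)) (periodic_limit G L s).
Proof.
  intros HG s. destruct (exists_nat_mult_ge L (a - s) HL) as [N HN].
  apply (is_lim_seq_incr_n _ N). rewrite <- (periodic_limit_shift_nat G L N s).
  apply is_lim_seq_ext with (u := fun n => G (s + INR N * L + INR n * L)).
  - intro n. rewrite plus_INR. f_equal. ring.
  - apply (periodic_limit_error G HG). lra.
Qed.

Lemma periodic_limit_uniform_error (G : R -> R) :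
  (forall t, a <= t -> Rabs (G (t + L) - G t) <= C * exp (- lam * t)) ->
  forall (N n : nat) t, a <= t + INR N * L ->
  Rabs (G (t + INR (n + N) * L) - periodic_limit G L t)
    <= C / (1 - exp (- lam * L)) * exp (- lam * a) * exp (- lam * L) ^ n.
Proof.
  intros HG N n t Ht. pose proof exp_neg_period_lt_1 as Hr.
  rewrite <- (periodic_limit_shift_nat G L N t), Rabs_minus_sym.
  replace (t + INR (n + N) * L) with (t + INR N * L + INR n * L) by (rewrite plus_INR; ring).
  eapply Rle_trans; [now apply (periodic_limit_error G HG)|].
  rewrite exp_shift_nat, !Rmult_assoc.
  apply Rmult_le_compat_l; [apply Rdiv_le_0_compat; lra|].
  apply Rmult_le_compat_r; [apply pow_le; lra|].
  apply exp_le_compat. nra.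
Qed.

Lemma is_derive_periodic_limit (G G' : R -> R) :
  (forall x, a <= x -> is_derive G x (G' x)) ->
  (forall x, a <= x -> continuity_pt G' x) ->
  (forall t, a <= t -> Rabs (G (t + L) - G t) <= C * exp (- lam * t)) ->
  (forall t, a <= t -> Rabs (G' (t + L) - G' t) <= C * exp (- lam * t)) ->
  forall c, is_derive (periodic_limit G L) c (periodic_limit G' L c).
Proof.
  intros HG HG' HGinc HG'inc c. pose proof exp_neg_period_lt_1 as Hr.
  destruct (exists_nat_mult_ge L (a - c + 1) HL) as [N HN].
  set (D := fun t => c - 1 < t /\ t < c + 1).
  assert (Hc : D c) by (unfold D; lra).
  assert (HDopen : open D) by (apply open_and; [apply open_gt | apply open_lt]).
  assert (Hfar : forall n t, D t -> a <= t + INR (n + N) * L).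
  { intros n t [Ht _]. rewrite plus_INR. pose proof (pos_INR n). nra. }
  set (fn := fun n t => G (t + INR (n + N) * L)).
  assert (HDerive : forall n t, D t -> Derive (fn n) t = G' (t + INR (n + N) * L))
    by (intros n t Ht; now apply is_derive_unique, is_derive_shift, HG, Hfar).
  assert (Hbeta : is_lim_seq (fun n =>
            C / (1 - exp (- lam * L)) * exp (- lam * a) * exp (- lam * L) ^ n) 0)
    by (apply is_lim_seq_scal_geom; lra).
  assert (Hlimit : is_derive (fun y => real (Lim_seq (fun n => fn n y))) c
                     (real (Lim_seq (fun n => Derive (fn n) c)))).
  { apply (CVU_Derive fn D); [exact HDopen | | | | | | exact Hc].
    - intros u v x Hu Hv Hx. unfold D in *. lra.
    - apply (CVU_dom_of_majorant fn D _ Hbeta). intros n x Hx.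
      unfold fn. rewrite periodic_limit_incr_n.
      apply (periodic_limit_uniform_error G HGinc). destruct Hx. lra.
    - intros n x Hx. eexists. now apply is_derive_shift, HG, Hfar.
    - intros n x Hx.
      apply continuity_pt_ext_loc with (f := fun t => G' (t + INR (n + N) * L)).
      + eapply filter_imp; [|exact (HDopen x Hx)].
        intros t Ht. symmetry. now apply HDerive.
      + apply (continuity_pt_comp (fun t => t + INR (n + N) * L) G').
        * apply (is_derive_continuity_pt _ _ 1). auto_derive; [easy | ring].
        * now apply HG', Hfar.
    - apply (CVU_dom_of_majorant _ D _ Hbeta). intros n x Hx.
      rewrite HDerive, (Lim_seq_ext _ _ (fun m => HDerive m x Hx)), periodic_limit_incr_n
        by exact Hx.
      apply (periodic_limit_uniform_error G' HG'inc). destruct Hx. lra. }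
  apply is_derive_ext with (f := fun y => real (Lim_seq (fun n => fn n y))).
  { intro y. apply periodic_limit_incr_n. }
  now rewrite (Lim_seq_ext _ _ (fun m => HDerive m c Hc)), periodic_limit_incr_n in Hlimit.
Qed.

End Periodic_limit.

Section Asymptotically_periodic.

Variables (L : R) (f df : R -> R -> R) (x0 : R) (phi phi' : R -> R) (A B m Kd : R).
Hypothesis HL : 0 < L.
Hypothesis Hf_cont : forall x y, continuous (fun p : R * R => f (fst p) (snd p)) (x, y).
Hypothesis Hf_per : forall x y, f (x + L) y = f x y.
Hypothesis Hf_dy : forall x y, is_derive (fun z => f x z) y (df x y).
Hypothesis Hphi_sol : forall x, x0 < x ->
  is_derive phi x (phi' x) /\ is_derive phi' x (f x (phi x)).
Hypothesis Hphi_range : forall x, x0 < x -> A <= phi x <= B.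
Hypothesis Hm : 0 < m.
Hypothesis Hdf_min : forall x y, A <= y <= B -> m <= df x y.
Hypothesis Hdf_max : forall x y, A <= y <= B -> Rabs (df x y) <= Kd.

Lemma f_mean_value t y1 y2 : A <= y1 <= B -> A <= y2 <= B ->
  exists xi, A <= xi <= B /\ f t y1 - f t y2 = df t xi * (y1 - y2).
Proof.
  intros Hy1 Hy2.
  destruct (MVT_gen (f t) y2 y1 (df t)) as [xi [Hxi Hmvt]].
  - intros y _. apply Hf_dy.
  - intros y _. apply (is_derive_continuity_pt _ _ _ (Hf_dy t y)).
  - exists xi. split; [|exact Hmvt].
    pose proof (Rmin_glb y2 y1 A ltac:(lra) ltac:(lra)).
    pose proof (Rmax_lub y2 y1 B ltac:(lra) ltac:(lra)). lra.
Qed.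

Let w x := phi (x + L) - phi x.
Let w' x := phi' (x + L) - phi' x.
Let w'' x := f x (phi (x + L)) - f x (phi x).

Lemma w_derive x : x0 < x -> is_derive w x (w' x).
Proof.
  intro Hx. apply (is_derive_minus (fun x => phi (x + L)) phi); [|now apply Hphi_sol].
  apply is_derive_shift, Hphi_sol. lra.
Qed.

Lemma w'_derive x : x0 < x -> is_derive w' x (w'' x).
Proof.
  intro Hx. apply (is_derive_minus (fun x => phi' (x + L)) phi'); [|now apply Hphi_sol].
  rewrite <- (Hf_per x). apply is_derive_shift, Hphi_sol. lra.
Qed.

Lemma w_range x : x0 < x -> Rabs (w x) <= B - A.
Proof.
  intro Hx. pose proof (Hphi_range x Hx). pose proof (Hphi_range (x + L) ltac:(lra)).
  unfold w. apply Rabs_le_between. lra.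
Qed.

Lemma w''_le x : x0 < x -> Rabs (w'' x) <= Kd * Rabs (w x).
Proof.
  intro Hx.
  destruct (f_mean_value x (phi (x + L)) (phi x)) as [xi [Hxi Hmvt]];
    [apply Hphi_range; lra | now apply Hphi_range|].
  unfold w'', w. rewrite Hmvt, Rabs_mult.
  apply Rmult_le_compat_r; [apply Rabs_pos | now apply Hdf_max].
Qed.

Lemma w_mul_w''_ge x : x0 < x -> m * (w x * w x) <= w x * w'' x.
Proof.
  intro Hx.
  destruct (f_mean_value x (phi (x + L)) (phi x)) as [xi [Hxi Hmvt]];
    [apply Hphi_range; lra | now apply Hphi_range|].
  unfold w'', w. rewrite Hmvt. pose proof (Hdf_min x xi Hxi).
  pose proof (Rle_0_sqr (phi (x + L) - phi x)). unfold Rsqr in *. nra.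
Qed.

Lemma w_exp_decay : exists lam C, 0 < lam /\ 0 <= C /\
  forall t, x0 + 1 <= t -> Rabs (w t) <= C * exp (- (2 * lam) * t).
Proof.
  set (k := Rmin 1 (2 * m)). set (b := x0 + 1).
  assert (Hk : 0 < k) by (apply Rmin_glb_lt; lra).
  assert (HAB : 0 <= B - A) by (pose proof (Hphi_range b ltac:(unfold b; lra)); lra).
  exists (k / 4), ((B - A) * exp (k * b / 2)). split; [lra|]. split.
  { apply Rmult_le_pos; [lra | apply Rlt_le, exp_pos]. }
  intros t Ht.
  assert (Hsq : w t * w t <= w b * w b * exp (- k * (t - b))).
  { apply (bounded_convex_exp_decay (fun x => w x * w x) (fun x => 2 * (w x * w' x))
             (fun x => 2 * (w' x * w' x + w x * w'' x)) x0 ((B - A) * (B - A)) (2 * m));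
      [lra | | | | | unfold b; lra | exact Ht].
    - intros x Hx. replace (2 * (w x * w' x)) with (w' x * w x + w x * w' x) by ring.
      apply (is_derive_mult w w); [now apply w_derive .. | apply Rmult_comm].
    - intros x Hx. apply is_derive_scal.
      apply (is_derive_mult w w'); [now apply w_derive | now apply w'_derive | apply Rmult_comm].
    - intros x Hx. pose proof (w_range x Hx). split; [apply Rle_0_sqr|].
      apply Rabs_le_between in H. nra.
    - intros x Hx. pose proof (w_mul_w''_ge x Hx). pose proof (Rle_0_sqr (w' x)).
      unfold Rsqr in *. lra. }
  set (y := (B - A) * exp (k * b / 2) * exp (- (2 * (k / 4)) * t)).
  assert (Hy : 0 <= y)
    by (apply Rmult_le_pos; [apply Rmult_le_pos; [lra|]|]; apply Rlt_le, exp_pos).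
  assert (Hyy : y * y = (B - A) * (B - A) * exp (- k * (t - b))).
  { unfold y. replace (exp (- k * (t - b)))
      with (exp (k * b / 2) * exp (- (2 * (k / 4)) * t) * (exp (k * b / 2) * exp (- (2 * (k / 4)) * t)))
      by (rewrite <- !exp_plus; f_equal; field). ring. }
  rewrite <- (Rabs_pos_eq y Hy). apply Rsqr_le_abs_0. unfold Rsqr. rewrite Hyy.
  pose proof (w_range b ltac:(unfold b; lra)) as Hwb. apply Rabs_le_between in Hwb.
  pose proof (exp_pos (- k * (t - b))).
  apply Rle_trans with (1 := Hsq). apply Rmult_le_compat_r; nra.
Qed.

Lemma increments_exp_decay : exists lam C, 0 < lam /\ 0 <= C /\
  forall t, Rabs x0 + 1 <= t ->
    Rabs (phi (t + L) - phi t) <= C * exp (- lam * t) /\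
    Rabs (phi' (t + L) - phi' t) <= C * exp (- lam * t) /\
    Rabs (f (t + L) (phi (t + L)) - f t (phi t)) <= C * exp (- lam * t).
Proof.
  destruct w_exp_decay as [lam [C1 [Hlam [HC1 Hw]]]].
  pose proof (Rle_abs x0). pose proof (Rabs_pos x0).
  assert (HAB : A <= B) by (pose proof (Hphi_range (x0 + 1) ltac:(lra)); lra).
  assert (HKd : 0 <= Kd) by (pose proof (Hdf_max x0 A ltac:(lra)); pose proof (Rabs_pos (df x0 A)); lra).
  exists lam, ((2 + Kd) * C1 + Kd * (B - A)). split; [exact Hlam|]. split; [nra|].
  intros t Ht.
  assert (Hsq : exp (- (2 * lam) * t) = exp (- lam * t) * exp (- lam * t))
    by (rewrite <- exp_plus; f_equal; ring).
  assert (Hexp_pos := exp_pos (- lam * t)).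
  assert (Hexp_le : exp (- lam * t) <= 1) by (rewrite <- exp_0; apply exp_le_compat; nra).
  assert (Hwt : Rabs (w t) <= C1 * exp (- lam * t)).
  { eapply Rle_trans; [apply Hw; lra|]. rewrite Hsq.
    apply Rmult_le_compat_l; [exact HC1|]. nra. }
  assert (Hw't : Rabs (w' t) <= (2 * C1 + Kd * (B - A)) * exp (- lam * t)).
  { eapply Rle_trans.
    - apply (Rabs_derive_le_of_bounds w w' w'' t (exp (- lam * t))
               (C1 * exp (- (2 * lam) * t)) (Kd * (B - A)) Hexp_pos).
      + intros x Hx. apply w_derive. lra.
      + intros x Hx. apply w'_derive. lra.
      + intros x Hx. eapply Rle_trans; [apply Hw; lra|].
        apply Rmult_le_compat_l; [exact HC1 | apply exp_le_compat; nra].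
      + intros x Hx. eapply Rle_trans; [apply w''_le; lra|].
        apply Rmult_le_compat_l; [exact HKd | apply w_range; lra].
    - rewrite Hsq. right. field. lra. }
  assert (Hw''t : Rabs (w'' t) <= Kd * C1 * exp (- lam * t)).
  { eapply Rle_trans; [apply w''_le; lra|]. rewrite Rmult_assoc.
    now apply Rmult_le_compat_l. }
  assert (0 <= C1 * exp (- lam * t)) by nra.
  assert (0 <= Kd * (B - A) * exp (- lam * t)) by (apply Rmult_le_pos; nra).
  assert (0 <= Kd * C1 * exp (- lam * t)) by (apply Rmult_le_pos; nra).
  rewrite Hf_per. fold (w t) (w' t) (w'' t).
  repeat split; nra.
Qed.

Theorem asymptotically_periodic_solution :
  exists vphi vphi' : R -> R,
    (forall x, is_derive vphi x (vphi' x) /\ is_derive vphi' x (f x (vphi x))) /\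
    (forall x, vphi (x + L) = vphi x) /\
    is_lim (fun x => Rabs (phi x - vphi x) + Rabs (phi' x - vphi' x)) p_infty 0.
Proof.
  destruct increments_exp_decay as [lam [C [Hlam [HC Hdecay]]]].
  set (b := Rabs x0 + 1).
  assert (Hb : x0 < b) by (unfold b; pose proof (Rle_abs x0); lra).
  assert (Hphi_cont : forall x, x0 < x -> continuous phi x)
    by (intros x Hx; apply (ex_derive_continuous phi x); eexists; now apply Hphi_sol).
  exists (periodic_limit phi L), (periodic_limit phi' L). split; [|split].
  - intro c. split.
    + apply (is_derive_periodic_limit L lam b C HL Hlam HC); try (intros t Ht; now apply Hdecay).
      * intros x Hx. apply Hphi_sol. lra.
      * intros x Hx. apply (is_derive_continuity_pt _ _ _ (proj2 (Hphi_sol x ltac:(lra)))).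
    + rewrite <- (periodic_limit_comp f phi L c Hf_per).
      * apply (is_derive_periodic_limit L lam b C HL Hlam HC);
          try (intros t Ht; now apply Hdecay).
        -- intros x Hx. apply Hphi_sol. lra.
        -- intros x Hx. apply continuity_pt_filterlim.
           apply (continuous_comp_2 (fun y => y) phi f x (continuous_id x)); [|apply Hf_cont].
           apply Hphi_cont. lra.
      * apply (is_derive_continuity_pt _ _ _ (Hf_dy c _)).
      * apply (periodic_limit_is_lim L lam b C HL Hlam). intros t Ht. now apply Hdecay.
  - apply periodic_limit_periodic.
  - set (K := C / (1 - exp (- lam * L))).
    apply (is_lim_le_le_loc (fun _ => 0) (fun x => 2 * K * exp (- lam * x))).
    + exists b. intros x Hx.
      pose proof (Rabs_pos (phi x - periodic_limit phi L x)).
      pose proof (Rabs_pos (phi' x - periodic_limit phi' L x)).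
      pose proof (periodic_limit_asymptotic L lam b C HL Hlam phi) as Hphi.
      pose proof (periodic_limit_asymptotic L lam b C HL Hlam phi') as Hphi'.
      assert (Rabs (phi x - periodic_limit phi L x) <= K * exp (- lam * x))
        by (apply Hphi; [intros t Ht; now apply Hdecay | lra]).
      assert (Rabs (phi' x - periodic_limit phi' L x) <= K * exp (- lam * x))
        by (apply Hphi'; [intros t Ht; now apply Hdecay | lra]).
      lra.
    + apply is_lim_const.
    + replace (Finite 0) with (Rbar_mult (2 * K) 0) by (simpl; f_equal; ring).
      apply is_lim_scal_l, is_lim_exp_neg, Hlam.
Qed.

End Asymptotically_periodic.

Lemma partial_derive_periodic (f df : R -> R -> R) L :
  (forall x y, f (x + L) y = f x y) ->
  (forall x y, is_derive (fun z => f x z) y (df x y)) ->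
  forall x y, df (x + L) y = df x y.
Proof.
  intros Hper Hd x y. rewrite <- (is_derive_unique _ _ _ (Hd x y)).
  symmetry. apply is_derive_unique. apply (is_derive_ext (fun z => f (x + L) z)); [intro; apply Hper | apply Hd].
Qed.

Lemma range_from_bounds (phi : R -> R) x0 M :
  (forall x, x0 <= x -> Rabs (phi x) <= M) ->
  exists A B, Glb_Rbar (range_from phi x0) = Finite A /\
              Lub_Rbar (range_from phi x0) = Finite B /\
              forall x, x0 <= x -> A <= phi x <= B.
Proof.
  intro HM. set (E := range_from phi x0).
  assert (Hin : forall x, x0 <= x -> E (phi x)) by (intros x Hx; now exists x).
  assert (Hbound : forall y, E y -> - M <= y <= M).
  { intros y [x [Hx ->]]. now apply Rabs_le_between, HM. }
  destruct (Glb_Rbar_correct E) as [Hlb Hglb].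
  destruct (Lub_Rbar_correct E) as [Hub Hlub].
  assert (HA : exists A, Glb_Rbar E = Finite A).
  { destruct (Glb_Rbar E) as [A| |]; [now exists A | |]; exfalso.
    - exact (Hlb _ (Hin x0 (Rle_refl x0))).
    - apply (Hglb (Finite (- M))). intros y Hy. apply Hbound in Hy. simpl. lra. }
  assert (HB : exists B, Lub_Rbar E = Finite B).
  { destruct (Lub_Rbar E) as [B| |]; [now exists B | |]; exfalso.
    - apply (Hlub (Finite M)). intros y Hy. apply Hbound in Hy. simpl. lra.
    - exact (Hub _ (Hin x0 (Rle_refl x0))). }
  destruct HA as [A HA], HB as [B HB]. exists A, B. do 2 (split; [assumption|]).
  intros x Hx. pose proof (Hlb _ (Hin x Hx)). pose proof (Hub _ (Hin x Hx)).
  rewrite HA in *. rewrite HB in *. now split.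
Qed.

Theorem theorem1
  (L : R) (f df : R -> R -> R) (x0 : R) (phi phi' : R -> R)
  (HL : 0 < L)
  (Hf_cont : forall x y, continuous (fun p : R * R => f (fst p) (snd p)) (x, y))
  (Hf_per : forall x y, f (x + L) y = f x y)
  (Hf_dy : forall x y, is_derive (fun z => f x z) y (df x y))
  (Hdf_cont : forall x y, continuous (fun p : R * R => df (fst p) (snd p)) (x, y))
  (Hphi_sol : forall x, x0 < x ->
      is_derive phi x (phi' x) /\ is_derive phi' x (f x (phi x)))
  (Hphi_x0 : filterlim phi (at_right x0) (locally (phi x0)))
  (Hphi_bdd : exists M, forall x, x0 <= x -> Rabs (phi x) <= M)
  (Hmin : exists m, 0 < m /\
      (exists xs ys, 0 <= xs <= L /\
         Rbar_le (Glb_Rbar (range_from phi x0)) (Finite ys) /\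
         Rbar_le (Finite ys) (Lub_Rbar (range_from phi x0)) /\
         df xs ys = m) /\
      (forall x y, 0 <= x <= L ->
         Rbar_le (Glb_Rbar (range_from phi x0)) (Finite y) ->
         Rbar_le (Finite y) (Lub_Rbar (range_from phi x0)) ->
         m <= df x y)) :
  exists vphi vphi' : R -> R,
    (forall x, is_derive vphi x (vphi' x) /\ is_derive vphi' x (f x (vphi x))) /\
    (forall x, vphi (x + L) = vphi x) /\
    is_lim (fun x => Rabs (phi x - vphi x) + Rabs (phi' x - vphi' x)) p_infty 0.
Proof.
  destruct Hphi_bdd as [M HM].
  destruct (range_from_bounds phi x0 M HM) as [A [B [HA [HB Hrange]]]].
  destruct Hmin as [m [Hm [_ Hmin]]]. rewrite HA, HB in Hmin. simpl in Hmin.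
  pose proof (partial_derive_periodic f df L Hf_per Hf_dy) as Hdf_per.
  assert (Hdf_min : forall x y, A <= y <= B -> m <= df x y).
  { intros x y Hy.
    destruct (periodic_reduce (fun x => df x y) L HL (fun x => Hdf_per x y) x) as [x' [Hx' ->]].
    apply Hmin; lra. }
  destruct (bounded_on_rectangle df 0 L A B) as [Kd HKd].
  { intros x y. apply continuity_2d_pt_filterlim, Hdf_cont. }
  assert (Hdf_max : forall x y, A <= y <= B -> Rabs (df x y) <= Kd).
  { intros x y Hy.
    destruct (periodic_reduce (fun x => df x y) L HL (fun x => Hdf_per x y) x) as [x' [Hx' ->]].
    now apply HKd. }
  apply (asymptotically_periodic_solution L f df x0 phi phi' A B m Kd); try assumption.
  intros x Hx. apply Hrange. lra.
Qed.
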